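(* Let $P$ and $Q$ be lower primes. Then $PQ-QP$ lies in the two-sided ideal of $\mathcal{A}$ generated by $\{(RL)D-D(RL) : D \text{ a lower prime}\}$.
   Context: $\mathcal{A}$ is the free associative $\mathbb{C}$-algebra on noncommuting generators $L,R$; words are finite products of these letters. A word is balanced if it contains equally many $L$'s and $R$'s. A word is prime if it is nonempty, balanced, and not a product of two nonempty balanced words. For a balanced word $W=a_1\cdots a_n$, $e_k(W)=\sum_{i=1}^k\overline{a_i}$ with $\overline{R}=1$, $\overline{L}=-1$. A prime $P$ of length $n$ is a lower prime if $e_k(P)<0$ for all $1\le k\le n-1$. *)

(* free associative algebra C<L,R> = monoid algebra {malg C[word]}
   over the free monoid word := seq bool, with C = R[i] for R : realType (= complex numbers). *)
From HB Require Import structures.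
From mathcomp Require Import all_boot all_order all_algebra.
From mathcomp Require Import reals complex.
From mathcomp.multinomials Require Import monalg.

Set Implicit Arguments.
Unset Strict Implicit.
Unset Printing Implicit Defensive.

Import Order.TTheory GRing.Theory Num.Theory.

(* Letters: true = R, false = L.  Words = elements of the free monoid on {L, R}. *)
Definition word := seq bool.
HB.instance Definition _ := Choice.on word.

Lemma word_unit (x y : word) : x ++ y = [::] -> x = [::] /\ y = [::].
Proof. by case: x => // ; case: y. Qed.

HB.instance Definition _ :=
  Choice_isMonomialDef.Build word (@catA bool) (@cat0s bool) (@cats0 bool) word_unit.

Definition letterL : word := [:: false].
Definition letterR : word := [:: true].

Definition freeAlg (C : fieldType) := {malg C[word]}.

Definition wd (C : fieldType) (w : word) : freeAlg C := << w >>%R.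

Definition balanced (w : word) : bool := count_mem true w == count_mem false w.

Definition prime_word (w : word) : Prop :=
  [/\ w != [::], balanced w &
      ~ exists u v : word, [/\ u != [::], v != [::], balanced u, balanced v & w = u ++ v]].

Definition letter_val (a : bool) : int := if a then 1%R else (-1)%R.

Definition ek (k : nat) (w : word) : int :=
  (\sum_(i < k) letter_val (nth false w i))%R.

Definition lower_prime (P : word) : Prop :=
  prime_word P /\ forall k : nat, (1 <= k)%N -> (k <= size P - 1)%N -> (ek k P < 0)%R.

Definition in_twosided_ideal (A : ringType) (S : A -> Prop) (x : A) : Prop :=
  exists l : seq (A * A * A),
    (forall t, t \in l -> S t.1.2) /\
    x = (\sum_(t <- l) t.1.1 * t.1.2 * t.2)%R.

From HB Require Import structures.
From mathcomp Require Import all_boot all_order all_algebra.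
From mathcomp Require Import reals complex.
From mathcomp.multinomials Require Import monalg.
From mathcomp Require Import zify.

Set Implicit Arguments.
Unset Strict Implicit.
Unset Printing Implicit Defensive.

Import Order.TTheory GRing.Theory.

Local Open Scope ring_scope.

(* Read L as -1 and R as +1.  A lower prime is then L Y R with Y a Dyck word
   (total height 0, no prefix above 0), and every Dyck word is a product of
   lower primes (cut at its last return to height 0).  Modulo the ideal I,
   RL commutes with every lower prime, hence with every Dyck word.  For lower
   primes P = L Y R and Q = L Z R we have PQ = L (Y RL Z) R, QP = L (Z RL Y) R
   and Y RL Z == RL Y Z == RL Z Y == Z RL Y mod I, where YZ == ZY because the
   lower-prime factors of Y and Z are shorter than P and Q: induct on |P|+|Q|. *)

Section IdealCongruence.
Variables (A : nzRingType) (S : A -> Prop).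
Local Notation ideal := (in_twosided_ideal S).

Lemma ideal0 : ideal 0.
Proof. by exists [::]; rewrite big_nil. Qed.

Lemma idealD x y : ideal x -> ideal y -> ideal (x + y).
Proof.
move=> [l1 [S1 ->]] [l2 [S2 ->]]; exists (l1 ++ l2); split; last by rewrite big_cat.
by move=> t; rewrite mem_cat => /orP[/S1|/S2].
Qed.

Lemma ideal_mul a b x : ideal x -> ideal (a * x * b).
Proof.
move=> [l [Sl ->]]; exists [seq (a * t.1.1, t.1.2, t.2 * b) | t <- l]; split.
  by move=> _ /mapP[t tl ->] /=; apply: Sl.
by rewrite big_map mulr_sumr mulr_suml; apply: eq_bigr => t _; rewrite !mulrA.
Qed.

Lemma ideal_gen x : S x -> ideal x.
Proof.
move=> Sx; exists [:: (1, x, 1)]; split; last by rewrite big_seq1 mul1r mulr1.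
by move=> t /[!inE] /eqP ->.
Qed.

Definition eqmod x y := ideal (x - y).

Lemma eqmod_refl x : eqmod x x.
Proof. by rewrite /eqmod subrr; exact: ideal0. Qed.

Lemma eqmod_sym x y : eqmod x y -> eqmod y x.
Proof. by move/(ideal_mul (-1) 1); rewrite mulr1 mulN1r opprB. Qed.

Lemma eqmod_trans y x z : eqmod x y -> eqmod y z -> eqmod x z.
Proof. by move=> xy yz; have := idealD xy yz; rewrite addrA subrK. Qed.

Lemma eqmod_mul a b x y : eqmod x y -> eqmod (a * x * b) (a * y * b).
Proof. by move/(ideal_mul a b); rewrite /eqmod mulrBr mulrBl. Qed.

Lemma eqmod_mull a x y : eqmod x y -> eqmod (a * x) (a * y).
Proof. by move/(eqmod_mul a 1); rewrite !mulr1. Qed.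

Lemma eqmod_mulr b x y : eqmod x y -> eqmod (x * b) (y * b).
Proof. by move/(eqmod_mul 1 b); rewrite !mul1r. Qed.

Definition commute_mod x y := eqmod (x * y) (y * x).

Lemma commute_mod_sym x y : commute_mod x y -> commute_mod y x.
Proof. exact: eqmod_sym. Qed.

Lemma commute_modMr x y z :
  commute_mod x y -> commute_mod x z -> commute_mod x (y * z).
Proof.
move=> xy xz; rewrite /commute_mod mulrA; apply: (eqmod_trans (eqmod_mulr z xy)).
by rewrite -!mulrA; apply: eqmod_mull.
Qed.

Lemma commute_mod_prodr (I : eqType) x (r : seq I) (F : I -> A) :
  (forall i, i \in r -> commute_mod x (F i)) -> commute_mod x (\prod_(i <- r) F i).
Proof.
elim: r => [|i r IHr] xF.
  by rewrite big_nil /commute_mod mulr1 mul1r; apply: eqmod_refl.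
rewrite big_cons; apply: commute_modMr; first by apply: xF; rewrite mem_head.
by apply: IHr => j jr; apply: xF; rewrite in_cons jr orbT.
Qed.

Lemma commute_mod_prod (I J : eqType) (r : seq I) (s : seq J) F G :
  (forall i j, i \in r -> j \in s -> commute_mod (F i) (G j)) ->
  commute_mod (\prod_(i <- r) F i) (\prod_(j <- s) G j).
Proof.
move=> FG; apply/commute_mod_sym/commute_mod_prodr => i ir.
by apply/commute_mod_sym/commute_mod_prodr => j js; apply: FG.
Qed.

Lemma eqmod_swap c y z : commute_mod c y -> commute_mod c z -> commute_mod y z ->
  eqmod (y * c * z) (z * c * y).
Proof.
move=> cy cz yz; apply: (eqmod_trans (eqmod_mulr z (commute_mod_sym cy))).
apply: (eqmod_trans (y := c * (z * y))); first by rewrite -mulrA; apply: eqmod_mull.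
by rewrite mulrA; apply: eqmod_mulr.
Qed.

End IdealCongruence.

Definition height (w : word) : int := foldr (fun a h => letter_val a + h) 0 w.

Lemma height_cat u v : height (u ++ v) = height u + height v.
Proof. by elim: u => [|a u IHu] /=; rewrite ?add0r // IHu addrA. Qed.

Lemma balancedE w : balanced w = (height w == 0).
Proof.
suff -> : height w = (count_mem true w)%:Z - (count_mem false w)%:Z by rewrite subr_eq0.
by elim: w => [|a w IHw] //=; rewrite IHw; case: a => /=; lia.
Qed.

Lemma ekE k w : (k <= size w)%N -> ek k w = height (take k w).
Proof.
elim: w k => [|a w IHw] [|k] //=; rewrite /ek ?big_ord0 // => kw.
by rewrite big_ord_recl; congr (_ + _); apply: IHw.
Qed.

Definition dyck (w : word) : Prop := height w = 0 /\ forall k, height (take k w) <= 0.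

Lemma lower_primeP w : lower_prime w <->
  [/\ w != [::], height w = 0 & forall k, (0 < k < size w)%N -> height (take k w) < 0].
Proof.
split=> [[[wn]]|[wn h0 neg]].
  rewrite balancedE => /eqP h0 _ ek_neg; split=> // k /andP[k0 kw].
  by rewrite -ekE ?(ltnW kw) //; apply: ek_neg; lia.
have w0 : (0 < size w)%N by rewrite lt0n size_eq0.
split=> [|k k1 kw]; last by rewrite ekE; [apply: neg|]; lia.
split=> //; first by rewrite balancedE h0.
move=> [u [v [un vn bu _ ew]]].
have : (0 < size u < size w)%N.
  rewrite ew size_cat lt0n size_eq0 un -{1}(addn0 (size u)) ltn_add2l.
  by rewrite lt0n size_eq0.
by move/neg; rewrite ew take_size_cat //; move: bu; rewrite balancedE => /eqP ->.
Qed.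

Lemma lower_primeE B : lower_prime B -> exists2 Y, B = letterL ++ Y ++ letterR & dyck Y.
Proof.
case/lower_primeP; case: B => [//|a B] _.
case/lastP: B => [|Y c]; first by case: a => /eqP.
rewrite -cats1 /= size_cat addn1 height_cat /= addr0 addrA => h0 neg.
have a0 : a = false by have := neg 1%N isT; rewrite /= take0; case: (a).
have hY : height Y < 1.
  by have := neg (size Y).+1; rewrite /= take_size_cat // a0 /= => /(_ (ltnSn _)); lia.
have c1 : c = true by move: h0 hY; rewrite a0; case: (c) => /=; lia.
have {}h0 : height Y = 0 by move: h0; rewrite a0 c1 /=; lia.
subst a c; exists Y => //; split=> // k.
have [kY|/ltnW Yk] := leqP k (size Y); last by rewrite take_oversize ?h0.
have /neg : (0 < k.+1 < (size Y).+2)%N by rewrite !ltnS.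
by rewrite /= takel_cat //; lia.
Qed.

Lemma dyck_last_lower_prime X : dyck X -> X != [::] ->
  exists A B, [/\ X = A ++ B, dyck A & lower_prime B].
Proof.
move=> [hX leX] Xn.
pose returns i := (i < size X)%N && (height (take i X) == 0).
have ex_ret : exists i, returns i.
  by exists 0%N; rewrite /returns take0 eqxx lt0n size_eq0 Xn.
have ub_ret i : returns i -> (i <= size X)%N by case/andP=> /ltnW.
case: (ex_maxnP ex_ret ub_ret) => j /andP[jX /eqP hj] jmax.
have hB : height (drop j X) = 0.
  by have := height_cat (take j X) (drop j X); rewrite cat_take_drop hX hj add0r.
exists (take j X), (drop j X); split; first by rewrite cat_take_drop.
  by split=> // k; rewrite -take_min.
apply/lower_primeP; split=> //; first by rewrite -size_eq0 size_drop subn_eq0 -ltnNge.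
move=> k /andP[k0]; rewrite size_drop => kX.
have := leX (j + k)%N; rewrite takeD height_cat hj add0r le_eqVlt.
case/orP=> [/eqP hk|//].
have : returns (j + k)%N.
  by rewrite /returns takeD height_cat hj add0r hk eqxx andbT; lia.
by move/jmax; lia.
Qed.

Lemma dyck_flatten_lower_primes X : dyck X ->
  exists2 s : seq word, X = flatten s & forall B, B \in s -> lower_prime B.
Proof.
have [n] := ubnP (size X); elim: n X => // n IHn X sX dX.
have [->|Xn] := eqVneq X [::]; first by exists [::].
have [A [B [eX dA lB]]] := dyck_last_lower_prime dX Xn.
have [B0 _ _] := (lower_primeP B).1 lB.
have sB : (0 < size B)%N by rewrite lt0n size_eq0.
have [|s eA ls] := IHn A _ dA; first by move: sX; rewrite eX size_cat; lia.
exists (rcons s B); first by rewrite flatten_rcons -eA.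
by move=> B'; rewrite mem_rcons inE => /orP[/eqP->|/ls].
Qed.

Lemma size_flatten_mem (T : eqType) (s : seq (seq T)) x :
  x \in s -> (size x <= size (flatten s))%N.
Proof.
elim: s => [//|y s IHs]; rewrite inE /= size_cat => /orP[/eqP->|/IHs].
  exact: leq_addr.
by move/leq_trans; apply; apply: leq_addl.
Qed.

Section FreeAlgebra.
Variable C : fieldType.
Local Notation wd := (wd C).

Lemma wd_cat u v : wd (u ++ v) = wd u * wd v.
Proof. by rewrite /wd malgM_def fgmulUU mulr1. Qed.

Lemma wd_flatten (s : seq word) : wd (flatten s) = \prod_(w <- s) wd w.
Proof. by elim: s => [|w s IHs]; rewrite ?big_nil ?big_cons //= wd_cat IHs. Qed.

Definition RL_commutators (x : freeAlg C) : Prop :=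
  exists D : word, lower_prime D /\
    x = wd (letterR ++ letterL) * wd D - wd D * wd (letterR ++ letterL).

Local Notation commutes := (commute_mod RL_commutators).

Lemma commute_RL_dyck X : dyck X -> commutes (wd (letterR ++ letterL)) (wd X).
Proof.
case/dyck_flatten_lower_primes=> s -> ls; rewrite wd_flatten.
by apply: commute_mod_prodr => D /ls lD; apply: ideal_gen; exists D.
Qed.

Lemma commute_dyck_of_lower_primes n X Y :
  (forall P Q, lower_prime P -> lower_prime Q -> (size P + size Q <= n)%N ->
     commutes (wd P) (wd Q)) ->
  dyck X -> dyck Y -> (size X + size Y <= n)%N -> commutes (wd X) (wd Y).
Proof.
move=> primes_commute /dyck_flatten_lower_primes[xs -> lxs].
move=> /dyck_flatten_lower_primes[ys -> lys] sXY; rewrite !wd_flatten.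
apply: commute_mod_prod => P Q Pxs Qys.
apply: primes_commute (lxs _ Pxs) (lys _ Qys) _.
by apply: leq_trans sXY; apply: leq_add; apply: size_flatten_mem.
Qed.

Lemma lower_primes_commute n P Q : (size P + size Q <= n)%N ->
  lower_prime P -> lower_prime Q -> commutes (wd P) (wd Q).
Proof.
elim: n P Q => [|n IHn] P Q sPQ /lower_primeE[Y eP dY] /lower_primeE[Z eQ dZ].
  by move: sPQ; rewrite eP.
have sYZ : (size Y + size Z <= n)%N by move: sPQ; rewrite eP eQ !size_cat /=; lia.
have cYZ := commute_dyck_of_lower_primes (fun P Q lP lQ s => IHn P Q s lP lQ) dY dZ sYZ.
have := eqmod_mul (wd letterL) (wd letterR)
  (eqmod_swap (commute_RL_dyck dY) (commute_RL_dyck dZ) cYZ).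
by rewrite /commute_mod eP eQ !wd_cat !mulrA.
Qed.

End FreeAlgebra.

Theorem lemma5p2 (R : realType) (P Q : word) :
  lower_prime P -> lower_prime Q ->
  in_twosided_ideal
    (fun x : freeAlg R[i] =>
       exists D : word, lower_prime D /\
         x = wd R[i] (letterR ++ letterL) * wd R[i] D - wd R[i] D * wd R[i] (letterR ++ letterL))
    (wd R[i] P * wd R[i] Q - wd R[i] Q * wd R[i] P).
Proof. exact: lower_primes_commute (leqnn _). Qed.
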